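(* Let $s\in(0,1)$. The function $\tau^n_s:[0,2\pi]\to[0,\infty]$ is increasing on $[0,2\pi]$.
   Context: For $n\ge1$ and $s\in(0,1)$, $\tau^n_s(2\pi)=+\infty$, $\tau^n_s(0)=s^{\frac{2n+3}{2n+1}}$, and for $\theta\in(0,2\pi)$, $$\tau^n_s(\theta)=s^{\frac1{2n+1}}\left(\frac{\sin\frac{\theta s}{2}}{\sin\frac{\theta}{2}}\right)^{\frac{2n-1}{2n+1}}\left(\frac{\sin\frac{\theta s}{2}-\frac{\theta s}{2}\cos\frac{\theta s}{2}}{\sin\frac{\theta}{2}-\frac{\theta}{2}\cos\frac{\theta}{2}}\right)^{\frac1{2n+1}}.$$ *)

From Stdlib Require Import Reals.
From Coquelicot Require Import Coquelicot.
Open Scope R_scope.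

Definition sxc (x : R) : R := sin x - x * cos x.

Definition tau (n : nat) (s theta : R) : Rbar :=
  let N := INR (2 * n + 1) in
  if Req_EM_T theta (2 * PI) then p_infty
  else if Req_EM_T theta 0 then Finite (Rpower s ((2 * INR n + 3) / N))
  else Finite (Rpower s (1 / N)
               * Rpower (sin (theta * s / 2) / sin (theta / 2)) ((2 * INR n - 1) / N)
               * Rpower (sxc (theta * s / 2) / sxc (theta / 2)) (1 / N)).

(* Write x = theta / 2 in (0, pi), q(x) = sin (s x) / sin x and r(x) = g (s x) / g x with
   g x = sin x - x cos x, so that tau(theta) = s^(1/N) q(x)^((2n-1)/N) r(x)^(1/N) with
   positive exponents.  Both q and r are strictly increasing on (0, pi) and exceed their
   limits s and s^3 at 0, which are exactly the factors of tau(0).  Each of these facts is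
   a sign condition on a function vanishing at 0, established by the mean value theorem
   from the sign of its derivative; for r the derivative numerator is
   x sin x (s^2 q(x) g(x) - g(s x)), whose positivity again follows from the monotonicity
   of q. *)
From Stdlib Require Import Reals Lra Psatz.
From Coquelicot Require Import Coquelicot.
Open Scope R_scope.

Lemma increasing_of_derive_pos (f f' : R -> R) (a b : R) : a < b ->
  (forall c, a <= c <= b -> is_derive f c (f' c)) ->
  (forall c, a < c < b -> 0 < f' c) -> f a < f b.
Proof.
  intros Hab Hd Hpos.
  destruct (MVT_cor2 f f' a b Hab) as [c [Hc Hin]].
  - intros c Hc. apply is_derive_Reals, Hd, Hc.
  - specialize (Hpos c Hin). nra.
Qed.

Lemma pos_of_derive_pos (f f' : R -> R) (x : R) : f 0 = 0 -> 0 < x ->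
  (forall c, 0 <= c <= x -> is_derive f c (f' c)) ->
  (forall c, 0 < c < x -> 0 < f' c) -> 0 < f x.
Proof.
  intros H0 Hx Hd Hpos. rewrite <- H0.
  exact (increasing_of_derive_pos f f' 0 x Hx Hd Hpos).
Qed.

Definition sin_ratio (s x : R) : R := sin (s * x) / sin x.

Definition sxc_ratio (s x : R) : R := sxc (s * x) / sxc x.

Lemma sxc_pos (x : R) : 0 < x < PI -> 0 < sxc x.
Proof.
  intros Hx. apply (pos_of_derive_pos sxc (fun c => c * sin c)); try lra.
  - unfold sxc. rewrite sin_0. ring.
  - intros c _. unfold sxc. auto_derive; [easy|]. ring.
  - intros c Hc. pose proof (sin_gt_0 c ltac:(lra) ltac:(lra)). nra.
Qed.

Section Ratios.

Variable s : R.
Hypothesis Hs : 0 < s < 1.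

Lemma sin_ratio_numerator_pos (x : R) : 0 < x < PI ->
  0 < s * cos (s * x) * sin x - sin (s * x) * cos x.
Proof.
  intros Hx.
  apply (pos_of_derive_pos (fun x => s * cos (s * x) * sin x - sin (s * x) * cos x)
           (fun c => (1 - s ^ 2) * sin (s * c) * sin c)); try lra.
  - rewrite Rmult_0_r, sin_0. ring.
  - intros c _. auto_derive; [easy|]. ring.
  - intros c Hc.
    pose proof (sin_gt_0 (s * c) ltac:(nra) ltac:(nra)).
    pose proof (sin_gt_0 c ltac:(lra) ltac:(lra)).
    apply Rmult_lt_0_compat; [apply Rmult_lt_0_compat|]; nra.
Qed.

Lemma sin_ratio_increasing (x y : R) : 0 < x -> x < y -> y < PI ->
  sin_ratio s x < sin_ratio s y.
Proof.
  intros Hx Hxy Hy.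
  apply (increasing_of_derive_pos (sin_ratio s)
    (fun c => (s * cos (s * c) * sin c - sin (s * c) * cos c) / sin c ^ 2)); [lra| |].
  - intros c Hc. pose proof (sin_gt_0 c ltac:(lra) ltac:(lra)).
    unfold sin_ratio. auto_derive; [lra|]. field. lra.
  - intros c Hc. pose proof (sin_gt_0 c ltac:(lra) ltac:(lra)).
    pose proof (sin_ratio_numerator_pos c ltac:(lra)).
    apply Rdiv_lt_0_compat; nra.
Qed.

Lemma sin_mul_gt (x : R) : 0 < x < PI -> s * sin x < sin (s * x).
Proof.
  intros Hx. apply Rlt_0_minus.
  apply (pos_of_derive_pos (fun x => sin (s * x) - s * sin x)
           (fun c => s * (cos (s * c) - cos c))); try lra.
  - rewrite Rmult_0_r, sin_0. ring.
  - intros c _. auto_derive; [easy|]. ring.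
  - intros c Hc. apply Rmult_lt_0_compat; [lra|].
    apply Rlt_0_minus, cos_decreasing_1; nra.
Qed.

Lemma sxc_mul_gt (x : R) : 0 < x < PI -> s ^ 3 * sxc x < sxc (s * x).
Proof.
  intros Hx. apply Rlt_0_minus.
  apply (pos_of_derive_pos (fun x => sxc (s * x) - s ^ 3 * sxc x)
           (fun c => s ^ 2 * c * (sin (s * c) - s * sin c))); try lra.
  - unfold sxc. rewrite Rmult_0_r, sin_0. ring.
  - intros c _. unfold sxc. auto_derive; [easy|]. ring.
  - intros c Hc. pose proof (sin_mul_gt c ltac:(lra)). pose proof (pow_lt s 2 ltac:(lra)).
    apply Rmult_lt_0_compat; nra.
Qed.

Lemma sxc_mul_lt (x0 : R) : 0 < x0 < PI ->
  sxc (s * x0) < s ^ 2 * sin_ratio s x0 * sxc x0.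
Proof.
  intros Hx0. apply Rlt_0_minus.
  apply (pos_of_derive_pos (fun x => s ^ 2 * sin_ratio s x0 * sxc x - sxc (s * x))
           (fun c => s ^ 2 * c * (sin_ratio s x0 * sin c - sin (s * c)))); try lra.
  - unfold sxc. rewrite Rmult_0_r, sin_0. ring.
  - intros c _. unfold sxc. auto_derive; [easy|]. ring.
  - intros c Hc. pose proof (sin_gt_0 c ltac:(lra) ltac:(lra)).
    pose proof (sin_ratio_increasing c x0 ltac:(lra) ltac:(lra) ltac:(lra)) as Hq.
    unfold sin_ratio at 1 in Hq.
    assert (sin (s * c) < sin_ratio s x0 * sin c).
    { apply (Rmult_lt_compat_r (sin c)) in Hq; [|lra].
      unfold Rdiv in Hq. rewrite Rmult_assoc, Rinv_l, Rmult_1_r in Hq; lra. }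
    pose proof (pow_lt s 2 ltac:(lra)). apply Rmult_lt_0_compat; nra.
Qed.

Lemma sxc_ratio_increasing (x y : R) : 0 < x -> x < y -> y < PI ->
  sxc_ratio s x < sxc_ratio s y.
Proof.
  intros Hx Hxy Hy.
  apply (increasing_of_derive_pos (sxc_ratio s)
    (fun c => c * sin c * (s ^ 2 * sin_ratio s c * sxc c - sxc (s * c)) / sxc c ^ 2));
    [lra| |].
  - intros c Hc. pose proof (sxc_pos c ltac:(lra)). pose proof (sin_gt_0 c ltac:(lra) ltac:(lra)).
    unfold sxc_ratio, sin_ratio. unfold sxc in *. auto_derive; [lra|]. field. lra.
  - intros c Hc. pose proof (sin_gt_0 c ltac:(lra) ltac:(lra)).
    pose proof (sxc_pos c ltac:(lra)). pose proof (sxc_mul_lt c ltac:(lra)).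
    apply Rdiv_lt_0_compat; [|nra]. apply Rmult_lt_0_compat; nra.
Qed.

Lemma s_lt_sin_ratio (x : R) : 0 < x < PI -> s < sin_ratio s x.
Proof.
  intros Hx. pose proof (sin_gt_0 x ltac:(lra) ltac:(lra)). pose proof (sin_mul_gt x Hx).
  unfold sin_ratio. apply Rmult_lt_reg_r with (sin x); [lra|].
  unfold Rdiv. rewrite Rmult_assoc, Rinv_l, Rmult_1_r; lra.
Qed.

Lemma s_cube_lt_sxc_ratio (x : R) : 0 < x < PI -> s ^ 3 < sxc_ratio s x.
Proof.
  intros Hx. pose proof (sxc_pos x Hx). pose proof (sxc_mul_gt x Hx).
  unfold sxc_ratio. apply Rmult_lt_reg_r with (sxc x); [lra|].
  unfold Rdiv. rewrite Rmult_assoc, Rinv_l, Rmult_1_r; lra.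
Qed.

End Ratios.

Definition tau_value (n : nat) (s a b : R) : R :=
  let N := INR (2 * n + 1) in
  Rpower s (1 / N) * Rpower a ((2 * INR n - 1) / N) * Rpower b (1 / N).

Lemma Rpower_pos (x y : R) : 0 < Rpower x y.
Proof. apply exp_pos. Qed.

Lemma INR_2n_1 (n : nat) : INR (2 * n + 1) = 2 * INR n + 1.
Proof. rewrite plus_INR, mult_INR. simpl. ring. Qed.

Lemma tau_value_lt (n : nat) (s a1 a2 b1 b2 : R) : (1 <= n)%nat -> 0 < s ->
  0 < a1 < a2 -> 0 < b1 < b2 -> tau_value n s a1 b1 < tau_value n s a2 b2.
Proof.
  intros Hn Hs Ha Hb. unfold tau_value. rewrite INR_2n_1.
  assert (1 <= INR n) by exact (le_INR 1 n Hn).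
  assert (Hw1 : 0 < 1 / (2 * INR n + 1)) by (apply Rdiv_lt_0_compat; lra).
  assert (Hw2 : 0 < (2 * INR n - 1) / (2 * INR n + 1)) by (apply Rdiv_lt_0_compat; lra).
  apply Rmult_le_0_lt_compat.
  - left. apply Rmult_lt_0_compat; apply Rpower_pos.
  - left. apply Rpower_pos.
  - apply Rmult_lt_compat_l; [apply Rpower_pos|]. apply Rlt_Rpower_l; assumption.
  - apply Rlt_Rpower_l; assumption.
Qed.

Lemma tau_two_pi (n : nat) (s : R) : tau n s (2 * PI) = p_infty.
Proof. unfold tau. destruct (Req_EM_T (2 * PI) (2 * PI)); [reflexivity|lra]. Qed.

Lemma tau_zero (n : nat) (s : R) : 0 < s -> tau n s 0 = Finite (tau_value n s s (s ^ 3)).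
Proof.
  intros Hs. pose proof PI_RGT_0.
  unfold tau, tau_value.
  destruct (Req_EM_T 0 (2 * PI)); [lra|].
  destruct (Req_EM_T 0 0); [|lra].
  f_equal. rewrite INR_2n_1.
  pose proof (pos_INR n).
  rewrite <- (Rpower_pow 3 s Hs), Rpower_mult, <- !Rpower_plus.
  f_equal. simpl INR. field. lra.
Qed.

Lemma tau_interior (n : nat) (s theta : R) : 0 < theta < 2 * PI ->
  tau n s theta = Finite (tau_value n s (sin_ratio s (theta / 2)) (sxc_ratio s (theta / 2))).
Proof.
  intros Ht. unfold tau, tau_value, sin_ratio, sxc_ratio.
  destruct (Req_EM_T theta (2 * PI)); [lra|].
  destruct (Req_EM_T theta 0); [lra|].
  replace (theta * s / 2) with (s * (theta / 2)) by field.
  reflexivity.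
Qed.

Lemma tau_lt_tau_two_pi (n : nat) (s theta : R) : 0 <= theta < 2 * PI ->
  Rbar_lt (tau n s theta) (tau n s (2 * PI)).
Proof.
  intros Ht. rewrite tau_two_pi. unfold tau.
  destruct (Req_EM_T theta (2 * PI)); [lra|].
  destruct (Req_EM_T theta 0); exact I.
Qed.

Theorem lemma2p1 (n : nat) (s : R) :
  (1 <= n)%nat -> 0 < s < 1 ->
  forall theta1 theta2 : R,
    0 <= theta1 -> theta1 < theta2 -> theta2 <= 2 * PI ->
    Rbar_lt (tau n s theta1) (tau n s theta2).
Proof.
  intros Hn Hs t1 t2 H1 H12 H2.
  destruct (Req_dec t2 (2 * PI)) as [-> | Ht2].
  { apply tau_lt_tau_two_pi. lra. }
  rewrite (tau_interior n s t2) by lra.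
  pose proof (s_lt_sin_ratio s Hs (t2 / 2) ltac:(lra)).
  pose proof (s_cube_lt_sxc_ratio s Hs (t2 / 2) ltac:(lra)).
  pose proof (pow_lt s 3 ltac:(lra)).
  destruct (Req_dec t1 0) as [-> | Ht1].
  - rewrite tau_zero by lra. apply tau_value_lt; [exact Hn|lra..].
  - rewrite (tau_interior n s t1) by lra.
    pose proof (s_lt_sin_ratio s Hs (t1 / 2) ltac:(lra)).
    pose proof (s_cube_lt_sxc_ratio s Hs (t1 / 2) ltac:(lra)).
    apply tau_value_lt; [exact Hn|lra| |].
    + split; [lra|]. apply sin_ratio_increasing; lra.
    + split; [lra|]. apply sxc_ratio_increasing; lra.
Qed.
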